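(* Consider the directed Poisson process stochastic block model with $n$ individuals, $Q$ groups, parameter $\theta=(\pi,\alpha)$, and observations $\mathcal O=\{(t_m,i_m,j_m): m=1,\dots,M\}$ on $[0,T]$. Let $$\mathcal T=\Big\{\tau=(\tau^{i,q})_{i\le n,q\le Q}:\ \tau^{i,q}\ge0,\ \textstyle\sum_{q=1}^Q\tau^{i,q}=1\ \text{for all } i\Big\},$$ and for $\tau\in\mathcal T$ let $\mathrm{pr}_\tau(\cdot\mid\mathcal O)$ be the factorized distribution on $\mathcal Z=(Z_1,\dots,Z_n)$ given by $\mathrm{pr}_\tau\{\mathcal Z=(q_1,\dots,q_n)\mid\mathcal O\}=\prod_{i=1}^n\tau^{i,q_i}$. Then the solution $\hat\tau$ of $$\hat\tau=\operatorname{Argmin}_{\tau\in\mathcal T}\mathrm{KL}\big(\mathrm{pr}_\tau(\cdot\mid\mathcal O)\,\big\|\,\mathrm{pr}_\theta(\cdot\mid\mathcal O)\big)$$ satisfies the fixed point equation $$\hat\tau^{i,q}=\frac{\pi_q\exp\{D_{iq}(\hat\tau,\alpha)\}}{\sum_{q'=1}^Q\pi_{q'}\exp\{D_{iq'}(\hat\tau,\alpha)\}},\qquad (i=1,\dots,n;\ q=1,\dots,Q),$$ where $$D_{iq}(\tau,\alpha)=-\sum_{l=1}^Q\sum_{j\ne i}\tau^{j,l}\{A^{(q,l)}(T)+A^{(l,q)}(T)\}+\sum_{l=1}^Q\sum_{m=1}^M\Big[\mathbf 1_{\{i_m=i\}}\tau^{j_m,l}\log\{\alpha^{(q,l)}(t_m)\}+\mathbf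 1_{\{j_m=i\}}\tau^{i_m,l}\log\{\alpha^{(l,q)}(t_m)\}\Big].$$
   Context: Directed Poisson process stochastic block model: $n$ individuals, dyads $\mathcal R=\{(i,j): i\ne j\}$. Latent $Z_1,\dots,Z_n$ i.i.d. in $\{1,\dots,Q\}$ with $\mathrm{pr}(Z_1=q)=\pi_q>0$. Conditionally on the $Z_i$'s, the counting processes $N_{i,j}$, $(i,j)\in\mathcal R$, on $[0,T]$ are independent inhomogeneous Poisson processes with intensity $\alpha^{(Z_i,Z_j)}$, where the $\alpha^{(q,l)}$ are nonnegative functions with cumulative intensities $A^{(q,l)}(t)=\int_0^t\alpha^{(q,l)}(u)\,du$. The observations are the events $\mathcal O=\{(t_m,i_m,j_m)\}_{m=1}^M$, meaning an interaction from $i_m$ to $j_m$ at time $t_m$, with $0<t_1<\dots<t_M<T$. $\mathrm{pr}_\theta(\cdot\mid\mathcal O)$ is the true conditional distribution of $\mathcal Z$ given $\mathcal O$, derived from the complete-data likelihood $\mathcal L(\mathcal O,\mathcal Z\mid\theta)=\exp\{-\sum_{(i,j)\in\mathcal R}A^{(Z_i,Z_j)}(T)\}\prod_{m=1}^M\alpha^{(Z_{i_m},Z_{j_m})}(t_m)\prod_{i=1}^n\pi_{Z_i}$. $\mathrm{KL}$ denotes Kullback–Leibler divergence and $\mathbf 1_A$ the indicator of $A$. *)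

From HB Require Import structures.
From mathcomp Require Import all_boot all_order all_algebra.
From mathcomp Require Import all_classical all_reals all_analysis.
Set Implicit Arguments. Unset Strict Implicit. Unset Printing Implicit Defensive.
Import Order.TTheory GRing.Theory Num.Theory.
Local Open Scope classical_set_scope.
Local Open Scope ring_scope.

Section PSBM.
Variables (R : realType) (n Q M : nat).

Definition config := {ffun 'I_n -> 'I_Q}.

Definition cumint (alpha : 'I_Q -> 'I_Q -> R -> R) (T : R) (q l : 'I_Q) : R :=
  Rintegral (@lebesgue_measure R) `[0, T] (alpha q l).

Definition lik (pi : 'I_Q -> R) (alpha : 'I_Q -> 'I_Q -> R -> R) (T : R)
  (t : 'I_M -> R) (src dst : 'I_M -> 'I_n) (z : config) : R :=
  expR (- \sum_(i < n) \sum_(j < n | i != j) cumint alpha T (z i) (z j))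
  * \prod_(m < M) alpha (z (src m)) (z (dst m)) (t m)
  * \prod_(i < n) pi (z i).

Definition post pi alpha T t src dst (z : config) : R :=
  lik pi alpha T t src dst z / \sum_(z' : config) lik pi alpha T t src dst z'.

Definition ptau (tau : 'I_n -> 'I_Q -> R) (z : config) : R :=
  \prod_(i < n) tau i (z i).

Definition KL (p q : config -> R) : R :=
  \sum_(z : config) (if p z == 0 then 0 else p z * ln (p z / q z)).

Definition in_T (tau : 'I_n -> 'I_Q -> R) : Prop :=
  (forall i q, 0 <= tau i q) /\ (forall i, \sum_(q < Q) tau i q = 1).

Definition Dfun (alpha : 'I_Q -> 'I_Q -> R -> R) (T : R)
  (t : 'I_M -> R) (src dst : 'I_M -> 'I_n)
  (tau : 'I_n -> 'I_Q -> R) (i : 'I_n) (q : 'I_Q) : R :=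
  - (\sum_(l < Q) \sum_(j < n | j != i)
        tau j l * (cumint alpha T q l + cumint alpha T l q))
  + \sum_(l < Q) \sum_(m < M)
      ((src m == i)%:R * tau (dst m) l * ln (alpha q l (t m))
       + (dst m == i)%:R * tau (src m) l * ln (alpha l q (t m))).

End PSBM.

From HB Require Import structures.
From mathcomp Require Import all_boot all_order all_algebra.
From mathcomp Require Import all_classical all_reals all_analysis.
From mathcomp Require Import ring lra.
Import Order.TTheory GRing.Theory Num.Theory.
Local Open Scope classical_set_scope.
Local Open Scope ring_scope.
Set Implicit Arguments. Unset Strict Implicit.

(* The KL divergence from the product distribution pr_tau to the posterior is
   a free energy: sum tau log tau, minus the expected complete-data
   log-likelihood, plus the log of the normalising constant. Under a product
   distribution the expected log-likelihood only involves one- and two-site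
   marginals, so as a function of the i-th row x of tau alone the free energy
   is sum_k x_k log x_k - sum_k x_k c_k + const, with c_k = log pi_k + D_ik.
   By Gibbs' inequality the unique minimiser of this over the simplex is the
   softmax of c, so the i-th row of the minimiser tau-hat must be it. *)

Lemma ln_prod (R : realType) (I : Type) (r : seq I) (P : pred I) (F : I -> R) :
  (forall i, P i -> 0 < F i) ->
  ln (\prod_(i <- r | P i) F i) = \sum_(i <- r | P i) ln (F i).
Proof.
move=> F_gt0; rewrite -[RHS]expRK expR_sum; congr ln.
by apply: eq_bigr => i /F_gt0 Fi; rewrite lnK ?posrE.
Qed.

Section Gibbs.
Variable R : realType.

Lemma ln_le_subr1 (y : R) : 0 < y -> ln y <= y - 1.
Proof. by move=> y_gt0; have := expR_ge1Dx (ln y); rewrite lnK ?posrE //; lra. Qed.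

Lemma ln_lt_subr1 (y : R) : 0 < y -> y != 1 -> ln y < y - 1.
Proof.
move=> y_gt0 y_neq1; have := @expR_gt1Dx R (ln y).
by rewrite lnK ?posrE // ln_eq0 // y_neq1 => /(_ isT); lra.
Qed.

Lemma rel_entropy_termE (a b : R) : 0 < a -> 0 < b ->
  a * (ln a - ln b) - a + b = a * (b / a - 1 - ln (b / a)).
Proof. by move=> a_gt0 b_gt0; rewrite ln_div ?posrE //; field; rewrite gt_eqF. Qed.

Lemma rel_entropy_term_ge0 (a b : R) : 0 <= a -> 0 < b ->
  0 <= a * (ln a - ln b) - a + b.
Proof.
rewrite le_eqVlt => /orP[/eqP <- b_gt0|a_gt0 b_gt0]; first by rewrite mul0r subr0 add0r ltW.
rewrite rel_entropy_termE //; apply: mulr_ge0; first exact: ltW.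
have := ln_le_subr1 (divr_gt0 b_gt0 a_gt0); set y := b / a; lra.
Qed.

Lemma rel_entropy_term_eq0 (a b : R) : 0 <= a -> 0 < b ->
  a * (ln a - ln b) - a + b = 0 -> a = b.
Proof.
rewrite le_eqVlt => /orP[/eqP <- b_gt0|a_gt0 b_gt0].
  by rewrite mul0r subr0 add0r => b0; move: b_gt0; rewrite b0 ltxx.
rewrite rel_entropy_termE // => /eqP; rewrite mulf_eq0 gt_eqF //= => /eqP e0.
have [ba1|ba_neq1] := eqVneq (b / a) 1.
  by apply/esym/eqP; rewrite -(divr1_eq ba1).
have := ln_lt_subr1 (divr_gt0 b_gt0 a_gt0) ba_neq1; move: e0; set y := b / a; lra.
Qed.

Lemma gibbs_eq (I : finType) (h g : I -> R) :
  (forall k, 0 <= h k) -> (forall k, 0 < g k) ->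
  \sum_k h k = 1 -> \sum_k g k = 1 ->
  \sum_k h k * (ln (h k) - ln (g k)) <= 0 -> h =1 g.
Proof.
move=> h_ge0 g_gt0 h1 g1 le0.
pose phi k := h k * (ln (h k) - ln (g k)) - h k + g k.
have phi_ge0 k : 0 <= phi k by exact: rel_entropy_term_ge0.
have sum_phi0 : \sum_k phi k = 0.
  apply/eqP; rewrite eq_le sumr_ge0 // andbT.
  by rewrite !big_split /= sumrN h1 g1 subrK.
move=> k; apply: rel_entropy_term_eq0 => //.
exact: (psumr_eq0P (fun k _ => phi_ge0 k) sum_phi0).
Qed.

Definition softmax (I : finType) (c : I -> R) (k : I) : R :=
  expR (c k) / \sum_k' expR (c k').

Section Softmax.
Variables (I : finType) (c : I -> R).

Lemma sum_expR_gt0 (k0 : I) : 0 < \sum_k expR (c k).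
Proof.
rewrite (bigD1 k0) //= ltr_wpDr ?expR_gt0 //.
by apply: sumr_ge0 => k _; rewrite ltW ?expR_gt0.
Qed.

Lemma softmax_gt0 k : 0 < softmax c k.
Proof. by rewrite divr_gt0 ?expR_gt0 ?(sum_expR_gt0 k). Qed.

Lemma sum_softmax (k0 : I) : \sum_k softmax c k = 1.
Proof. by rewrite -mulr_suml divff // gt_eqF ?(sum_expR_gt0 k0). Qed.

Lemma ln_softmax k : ln (softmax c k) = c k - ln (\sum_k' expR (c k')).
Proof. by rewrite ln_div ?posrE ?expR_gt0 ?(sum_expR_gt0 k) // expRK. Qed.

Lemma softmax_argmin (h : I -> R) :
  (forall k, 0 <= h k) -> \sum_k h k = 1 ->
  \sum_k h k * ln (h k) - \sum_k h k * c k
    <= \sum_k softmax c k * ln (softmax c k) - \sum_k softmax c k * c k ->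
  h =1 softmax c.
Proof.
move=> h_ge0 h1 h_le.
have [k0 _|I0] := pickP (@predT I); last first.
  have h0 : \sum_k h k = 0 by rewrite big1 // => k; have := I0 k.
  by move: h1; rewrite h0 => /eqP; rewrite eq_sym oner_eq0.
apply: gibbs_eq => //; [exact: softmax_gt0 | exact: sum_softmax k0 |].
set S := \sum_k' expR (c k').
have -> : \sum_k h k * (ln (h k) - ln (softmax c k))
    = \sum_k h k * ln (h k) - \sum_k h k * c k + ln S.
  rewrite -sumrB -[ln S]mulr1 -h1 mulr_sumr -big_split /=.
  by apply: eq_bigr => k _; rewrite ln_softmax; ring.
suff softmax_val : \sum_k softmax c k * ln (softmax c k) - \sum_k softmax c k * c k
    = - ln S by lra.
rewrite -sumrB -[ln S]mulr1 -(sum_softmax k0) mulr_sumr -sumrN.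
by apply: eq_bigr => k _; rewrite ln_softmax; ring.
Qed.

End Softmax.
End Gibbs.

Section MeanFieldExpectations.
Variables (R : realType) (n Q : nat) (tau : 'I_n -> 'I_Q -> R).

Lemma sum_ptau_prod (phi : 'I_n -> 'I_Q -> R) :
  \sum_(z : config n Q) ptau tau z * \prod_j phi j (z j)
  = \prod_j \sum_k tau j k * phi j k.
Proof. by rewrite bigA_distr_bigA; apply: eq_bigr => z _; rewrite -big_split. Qed.

Hypothesis tau_row1 : forall j, \sum_k tau j k = 1.

Lemma sum_ptau_prod_on (P : pred 'I_n) (phi : 'I_n -> 'I_Q -> R) :
  \sum_(z : config n Q) ptau tau z * \prod_(j | P j) phi j (z j)
  = \prod_(j | P j) \sum_k tau j k * phi j k.
Proof.
have := sum_ptau_prod (fun j k => if P j then phi j k else 1) => /= prodE.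
transitivity (\sum_(z : config n Q) ptau tau z * \prod_j (if P j then phi j (z j) else 1)).
  by apply: eq_bigr => z _; rewrite big_mkcond.
rewrite prodE [RHS]big_mkcond; apply: eq_bigr => j _.
case: (P j) => //; rewrite -[RHS](tau_row1 j).
by apply: eq_bigr => k _; rewrite mulr1.
Qed.

Lemma sum_ptau : \sum_(z : config n Q) ptau tau z = 1.
Proof.
transitivity (\sum_(z : config n Q) ptau tau z * \prod_(j : 'I_n | xpred0 j) (1 : R)).
  by apply: eq_bigr => z _; rewrite big_pred0_eq mulr1.
by rewrite (sum_ptau_prod_on xpred0 (fun _ _ => 1)) big_pred0_eq.
Qed.

Lemma sum_ptau1 (a : 'I_n) (f : 'I_Q -> R) :
  \sum_(z : config n Q) ptau tau z * f (z a) = \sum_k tau a k * f k.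
Proof.
have := sum_ptau_prod_on (pred1 a) (fun _ => f); rewrite big_pred1_eq => <-.
by apply: eq_bigr => z _; rewrite big_pred1_eq.
Qed.

Lemma prod_pred2 (a b : 'I_n) (F : 'I_n -> R) : a != b ->
  \prod_(j | (j == a) || (j == b)) F j = F a * F b.
Proof.
move=> ab; rewrite (bigD1 a) ?eqxx //= (big_pred1 b) // => j /=.
by case: (eqVneq j a) => [->|]; rewrite ?(negbTE ab) ?andbT.
Qed.

Lemma sum_delta (g : 'I_Q -> R) (x : 'I_Q) : \sum_k g k * (k == x)%:R = g x.
Proof.
by rewrite (bigD1 x) //= eqxx mulr1 big1 ?addr0 // => k /negbTE->; rewrite mulr0.
Qed.

Lemma sum_ptau2 (a b : 'I_n) (f : 'I_Q -> 'I_Q -> R) : a != b ->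
  \sum_(z : config n Q) ptau tau z * f (z a) (z b)
  = \sum_q \sum_l tau a q * tau b l * f q l.
Proof.
move=> ab; have ba : b != a by rewrite eq_sym.
(* Expanding along the value q of z a leaves products of one-site functions. *)
transitivity (\sum_q \sum_(z : config n Q) ptau tau z
    * \prod_(j | (j == a) || (j == b))
        (if j == a then (z j == q)%:R else f q (z j))).
  rewrite exchange_big; apply: eq_bigr => z _.
  rewrite -(sum_delta (fun q => f q (z b)) (z a)) mulr_sumr.
  apply: eq_bigr => q _.
  by rewrite prod_pred2 // eqxx (negbTE ba) [_ * (_ == _)%:R]mulrC eq_sym.
apply: eq_bigr => q _.
rewrite (sum_ptau_prod_on _ (fun j k => if j == a then (k == q)%:R else f q k)) /=.
rewrite prod_pred2 // eqxx (negbTE ba) sum_delta mulr_sumr.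
by apply: eq_bigr => l _; rewrite mulrA.
Qed.

End MeanFieldExpectations.

Section SetRow.
Variables (R : realType) (n Q : nat) (tau : 'I_n -> 'I_Q -> R) (i : 'I_n) (x : 'I_Q -> R).

Definition set_row : 'I_n -> 'I_Q -> R := fun j k => if j == i then x k else tau j k.

Lemma set_row_id k : set_row i k = x k.
Proof. by rewrite /set_row eqxx. Qed.

Lemma set_row_ne j k : j != i -> set_row j k = tau j k.
Proof. by rewrite /set_row => /negbTE ->. Qed.

Lemma sum_set_row (F : R -> 'I_Q -> R) :
  \sum_j \sum_k F (set_row j k) k
  = \sum_k F (x k) k + \sum_(j | j != i) \sum_k F (tau j k) k.
Proof.
rewrite (bigD1 i) //=; congr (_ + _); first by apply: eq_bigr => k _; rewrite set_row_id.
by apply: eq_bigr => j ji; apply: eq_bigr => k _; rewrite set_row_ne.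
Qed.

Lemma pair_sum_set_row (A : 'I_Q -> 'I_Q -> R) :
  \sum_a \sum_(b | a != b) \sum_q \sum_l set_row a q * set_row b l * A q l
  = \sum_k x k * (\sum_l \sum_(j | j != i) tau j l * (A k l + A l k))
    + \sum_(a | a != i) \sum_(b | (a != b) && (b != i)) \sum_q \sum_l
        tau a q * tau b l * A q l.
Proof.
rewrite (bigD1 i) //=.
have row_i : \sum_(b | i != b) \sum_q \sum_l set_row i q * set_row b l * A q l
    = \sum_k \sum_l \sum_(j | j != i) x k * tau j l * A k l.
  rewrite (eq_bigl (fun b => b != i)); last by move=> b; rewrite eq_sym.
  rewrite exchange_big; apply: eq_bigr => k _.
  rewrite exchange_big; apply: eq_bigr => l _.
  by apply: eq_bigr => j ji; rewrite set_row_id set_row_ne.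
have col_i : \sum_(a | a != i) \sum_(b | a != b) \sum_q \sum_l
      set_row a q * set_row b l * A q l
    = \sum_k \sum_l \sum_(j | j != i) x k * tau j l * A l k
      + \sum_(a | a != i) \sum_(b | (a != b) && (b != i)) \sum_q \sum_l
          tau a q * tau b l * A q l.
  have -> : \sum_k \sum_l \sum_(j | j != i) x k * tau j l * A l k
      = \sum_(j | j != i) \sum_l \sum_k tau j l * x k * A l k.
    under eq_bigr do rewrite exchange_big.
    rewrite exchange_big /=; apply: eq_bigr => j _.
    rewrite exchange_big /=; apply: eq_bigr => l _.
    by apply: eq_bigr => k _; rewrite (mulrC (x k)).
  rewrite -big_split /=; apply: eq_bigr => a ai.
  rewrite (bigD1 i) //=; congr (_ + _).
    by apply: eq_bigr => q _; apply: eq_bigr => l _; rewrite set_row_id set_row_ne.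
  apply: eq_bigr => b /andP[ab bi]; apply: eq_bigr => q _; apply: eq_bigr => l _.
  by rewrite !set_row_ne.
rewrite row_i col_i addrA; congr (_ + _).
rewrite -big_split /=; apply: eq_bigr => k _.
rewrite -big_split mulr_sumr /=; apply: eq_bigr => l _.
rewrite -big_split mulr_sumr /=; apply: eq_bigr => j _.
by ring.
Qed.

Variables (M : nat) (src dst : 'I_M -> 'I_n).
Hypothesis src_neq_dst : forall m, src m != dst m.

Lemma obs_sum_set_row (L : 'I_M -> 'I_Q -> 'I_Q -> R) :
  \sum_m \sum_q \sum_l set_row (src m) q * set_row (dst m) l * L m q l
  = \sum_k x k * (\sum_l \sum_m ((src m == i)%:R * tau (dst m) l * L m k l
                                  + (dst m == i)%:R * tau (src m) l * L m l k))
    + \sum_m ((src m != i) && (dst m != i))%:R *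
        \sum_q \sum_l tau (src m) q * tau (dst m) l * L m q l.
Proof.
have per_obs m : \sum_q \sum_l set_row (src m) q * set_row (dst m) l * L m q l
  = ((src m == i)%:R * \sum_q \sum_l x q * tau (dst m) l * L m q l
     + (dst m == i)%:R * \sum_q \sum_l tau (src m) q * x l * L m q l)
    + ((src m != i) && (dst m != i))%:R *
        \sum_q \sum_l tau (src m) q * tau (dst m) l * L m q l.
  case: (eqVneq (src m) i) => [si|si].
    have di : dst m != i by rewrite -si eq_sym src_neq_dst.
    rewrite (negbTE di) /= mul1r !mul0r !addr0.
    by apply: eq_bigr => q _; apply: eq_bigr => l _; rewrite si set_row_id set_row_ne.
  case: (eqVneq (dst m) i) => [di|di] /=.
    rewrite mul1r !mul0r add0r addr0.
    by apply: eq_bigr => q _; apply: eq_bigr => l _; rewrite di set_row_id set_row_ne.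
  rewrite mul1r !mul0r !add0r.
  by apply: eq_bigr => q _; apply: eq_bigr => l _; rewrite !set_row_ne.
rewrite (eq_bigr _ (fun m _ => per_obs m)) big_split /=; congr (_ + _).
have -> : \sum_k x k * (\sum_l \sum_m ((src m == i)%:R * tau (dst m) l * L m k l
                                         + (dst m == i)%:R * tau (src m) l * L m l k))
    = \sum_k \sum_l \sum_m x k * ((src m == i)%:R * tau (dst m) l * L m k l)
      + \sum_k \sum_l \sum_m x k * ((dst m == i)%:R * tau (src m) l * L m l k).
  rewrite -big_split /=; apply: eq_bigr => k _.
  rewrite mulr_sumr -big_split /=; apply: eq_bigr => l _.
  by rewrite mulr_sumr -big_split /=; apply: eq_bigr => m _; rewrite mulrDr.
rewrite big_split /=; congr (_ + _).
  under eq_bigr do rewrite mulr_sumr; under eq_bigr do under eq_bigr do rewrite mulr_sumr.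
  rewrite exchange_big; apply: eq_bigr => k _.
  rewrite exchange_big; apply: eq_bigr => l _.
  by apply: eq_bigr => m _; ring.
under eq_bigr do rewrite mulr_sumr; under eq_bigr do under eq_bigr do rewrite mulr_sumr.
under eq_bigr do rewrite exchange_big.
rewrite exchange_big; apply: eq_bigr => k _.
rewrite exchange_big; apply: eq_bigr => l _.
by apply: eq_bigr => m _; ring.
Qed.

End SetRow.

Lemma set_row_self (R : realType) (n Q : nat) (tau : 'I_n -> 'I_Q -> R) i :
  set_row tau i (tau i) = tau.
Proof. by apply/funext => j; apply/funext => k; rewrite /set_row; case: eqP => [->|]. Qed.

Lemma in_T_set_row (R : realType) (n Q : nat) (tau : 'I_n -> 'I_Q -> R) i x :
  in_T tau -> (forall k, 0 <= x k) -> \sum_k x k = 1 -> in_T (set_row tau i x).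
Proof.
by move=> [tau_ge0 tau_row1] x_ge0 x1; split=> j; rewrite /set_row; case: eqP.
Qed.

Section FreeEnergy.
Variables (R : realType) (n Q M : nat).
Variables (pi : 'I_Q -> R) (alpha : 'I_Q -> 'I_Q -> R -> R) (T : R).
Variables (t : 'I_M -> R) (src dst : 'I_M -> 'I_n).
Hypothesis pi_gt0 : forall q, 0 < pi q.
Hypothesis alpha_obs_gt0 : forall m q l, 0 < alpha q l (t m).
Hypothesis src_neq_dst : forall m, src m != dst m.

Lemma lik_gt0 (z : config n Q) : 0 < lik pi alpha T t src dst z.
Proof. by rewrite !mulr_gt0 ?expR_gt0 // prodr_gt0. Qed.

Lemma ln_lik (z : config n Q) :
  ln (lik pi alpha T t src dst z) =
   - (\sum_a \sum_(b | a != b) cumint alpha T (z a) (z b))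
   + \sum_m ln (alpha (z (src m)) (z (dst m)) (t m))
   + \sum_a ln (pi (z a)).
Proof.
have obs_gt0 : 0 < \prod_m alpha (z (src m)) (z (dst m)) (t m) by rewrite prodr_gt0.
have prior_gt0 : 0 < \prod_a pi (z a) by rewrite prodr_gt0.
by rewrite /lik !lnM ?posrE ?mulr_gt0 ?expR_gt0 // expRK !ln_prod.
Qed.

Definition mf_loglik (tau : 'I_n -> 'I_Q -> R) : R :=
  - (\sum_a \sum_(b | a != b) \sum_q \sum_l tau a q * tau b l * cumint alpha T q l)
  + \sum_m \sum_q \sum_l tau (src m) q * tau (dst m) l * ln (alpha q l (t m))
  + \sum_a \sum_q tau a q * ln (pi q).

Lemma expected_ln_lik (tau : 'I_n -> 'I_Q -> R) :
  (forall j, \sum_k tau j k = 1) ->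
  \sum_(z : config n Q) ptau tau z * ln (lik pi alpha T t src dst z) = mf_loglik tau.
Proof.
move=> tau_row1; under eq_bigr do rewrite ln_lik !mulrDr mulrN !mulr_sumr.
rewrite !big_split /= sumrN; congr (- _ + _ + _).
- rewrite exchange_big; apply: eq_bigr => a _.
  under eq_bigr do rewrite mulr_sumr.
  rewrite exchange_big; apply: eq_bigr => b ab.
  exact: (sum_ptau2 tau_row1 (fun q l => cumint alpha T q l) ab).
- rewrite exchange_big; apply: eq_bigr => m _.
  exact: (sum_ptau2 tau_row1 (fun q l => ln (alpha q l (t m))) (src_neq_dst m)).
- rewrite exchange_big; apply: eq_bigr => a _.
  exact: (sum_ptau1 tau_row1 a (fun q => ln (pi q))).
Qed.

Definition free_energy (tau : 'I_n -> 'I_Q -> R) : R :=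
  \sum_j \sum_k tau j k * ln (tau j k) - mf_loglik tau
  + ln (\sum_(z : config n Q) lik pi alpha T t src dst z).

Lemma KL_term_ptau_post (tau : 'I_n -> 'I_Q -> R) (z : config n Q) :
  (forall j k, 0 <= tau j k) ->
  (if ptau tau z == 0 then 0
   else ptau tau z * ln (ptau tau z / post pi alpha T t src dst z))
  = ptau tau z * (\sum_j ln (tau j (z j)) - ln (lik pi alpha T t src dst z)
                  + ln (\sum_(z' : config n Q) lik pi alpha T t src dst z')).
Proof.
move=> tau_ge0; have [->|ptau_neq0] := eqVneq (ptau tau z) 0; first by rewrite mul0r.
have tau_z_gt0 j : 0 < tau j (z j).
  rewrite lt_def tau_ge0 andbT; apply: contraNneq ptau_neq0 => tau_z0.
  by rewrite /ptau (bigD1 j) //= tau_z0 mul0r.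
have Z_gt0 : 0 < \sum_(z' : config n Q) lik pi alpha T t src dst z'.
  rewrite (bigD1 z) //= ltr_wpDr ?lik_gt0 //.
  by apply: sumr_ge0 => z' _; rewrite ltW ?lik_gt0.
have ptau_gt0 : 0 < ptau tau z by rewrite prodr_gt0.
rewrite /post !ln_div ?posrE ?divr_gt0 ?lik_gt0 // /ptau ln_prod //.
by congr (_ * _); ring.
Qed.

Lemma KL_ptau_post (tau : 'I_n -> 'I_Q -> R) :
  in_T tau -> KL (ptau tau) (post pi alpha T t src dst) = free_energy tau.
Proof.
move=> [tau_ge0 tau_row1]; rewrite /KL.
under eq_bigr do rewrite KL_term_ptau_post // !mulrDr mulrN.
rewrite !big_split /= sumrN -mulr_suml (sum_ptau tau_row1) mul1r.
rewrite expected_ln_lik //; congr (_ - _ + _).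
under eq_bigr do rewrite mulr_sumr.
rewrite exchange_big; apply: eq_bigr => j _.
exact: (sum_ptau1 tau_row1 j (fun k => ln (tau j k))).
Qed.

Definition mean_field_score (tau : 'I_n -> 'I_Q -> R) (i : 'I_n) (k : 'I_Q) : R :=
  ln (pi k) + Dfun alpha T t src dst tau i k.

Lemma expR_mean_field_score tau i k :
  expR (mean_field_score tau i k) = pi k * expR (Dfun alpha T t src dst tau i k).
Proof. by rewrite expRD lnK ?posrE. Qed.

Lemma free_energy_set_row (tau : 'I_n -> 'I_Q -> R) (i : 'I_n) (x y : 'I_Q -> R) :
  free_energy (set_row tau i x)
    - (\sum_k x k * ln (x k) - \sum_k x k * mean_field_score tau i k)
  = free_energy (set_row tau i y)
    - (\sum_k y k * ln (y k) - \sum_k y k * mean_field_score tau i k).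
Proof.
have scoreE (z : 'I_Q -> R) : \sum_k z k * mean_field_score tau i k =
   \sum_k z k * ln (pi k)
   - \sum_k z k * (\sum_l \sum_(j | j != i)
                     tau j l * (cumint alpha T k l + cumint alpha T l k))
   + \sum_k z k * (\sum_l \sum_m
        ((src m == i)%:R * tau (dst m) l * ln (alpha k l (t m))
         + (dst m == i)%:R * tau (src m) l * ln (alpha l k (t m)))).
  rewrite -sumrB -big_split /=; apply: eq_bigr => k _.
  by rewrite /mean_field_score /Dfun; ring.
rewrite !scoreE /free_energy /mf_loglik.
rewrite !(sum_set_row tau i _ (fun v _ => v * ln v)).
rewrite !(sum_set_row tau i _ (fun v k => v * ln (pi k))) /=.
rewrite !pair_sum_set_row.
rewrite !(obs_sum_set_row _ _ _ src_neq_dst (fun m q l => ln (alpha q l (t m)))).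
ring.
Qed.

End FreeEnergy.

Unset Implicit Arguments.

Theorem proposition3 (R : realType) (n Q M : nat)
  (pi : 'I_Q -> R) (alpha : 'I_Q -> 'I_Q -> R -> R) (T : R)
  (t : 'I_M -> R) (src dst : 'I_M -> 'I_n)
  (hpi_pos : forall q, 0 < pi q)
  (hpi_sum : \sum_(q < Q) pi q = 1)
  (hT : 0 < T)
  (halpha_ge0 : forall q l x, 0 <= alpha q l x)
  (halpha_int : forall q l,
     (@lebesgue_measure R).-integrable `[0, T] (EFin \o alpha q l))
  (halpha_obs : forall m q l, 0 < alpha q l (t m))
  (ht_range : forall m, 0 < t m < T)
  (ht_incr : forall m m' : 'I_M, (m < m')%N -> t m < t m')
  (hdyad : forall m, src m != dst m)
  (tauh : 'I_n -> 'I_Q -> R)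
  (htauh : in_T tauh)
  (hmin : forall tau, in_T tau ->
     KL (ptau tauh) (post pi alpha T t src dst)
       <= KL (ptau tau) (post pi alpha T t src dst)) :
  forall (i : 'I_n) (q : 'I_Q),
    tauh i q =
      pi q * expR (Dfun alpha T t src dst tauh i q)
      / \sum_(q' < Q) pi q' * expR (Dfun alpha T t src dst tauh i q').
Proof.
move=> i q; have [tauh_ge0 tauh_row1] := htauh.
set c := mean_field_score pi alpha T t src dst tauh i.
have tauh_softmax : tauh i =1 softmax c.
  apply: softmax_argmin => //.
  have g_in_T : in_T (set_row tauh i (softmax c)).
    by apply: in_T_set_row => //; [move=> k; exact/ltW/softmax_gt0 | exact: sum_softmax q].
  have := hmin _ g_in_T.
  rewrite !(KL_ptau_post T hpi_pos halpha_obs hdyad) //.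
  have := free_energy_set_row pi alpha T t hdyad tauh i (tauh i) (softmax c).
  by rewrite set_row_self; lra.
have scoreE := expR_mean_field_score alpha T t src dst hpi_pos tauh i.
by rewrite tauh_softmax /softmax scoreE; under eq_bigr do rewrite scoreE.
Qed.
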